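(* Let $l^{(u)}\in L_u$ for each $u\in U^I_{\min}$. Then $\sum_{u\in U^I_{\min}}l^{(u)}={\bf 0}$ if and only if $l^{(u)}={\bf 0}$ for all $u\in U^I_{\min}$.
   Context: $n\ge1$, $d\ge2$, $I\subseteq\{0,\dots,n\}$; ${\bf a}_1,\dots,{\bf a}_N\in\mathbb{N}^{n+1}$ with coordinate sums $d$, ${\bf a}_j^+=({\bf a}_j,1)\in\mathbb{N}^{n+2}$. $\mu_I$: $\lceil|I|/d\rceil=\mu_I+1$. $U^I_{\min}$: the set of $u\in\mathbb{N}^{n+2}$ with $\sum_{i=0}^nu_i=du_{n+1}$, $u_i>0$ for $i\in I$, and $u_{n+1}=\mu_I+1$. Hypothesis: $N\ge\mu_I+|U^I_{\min}|$ and for each $u\in U^I_{\min}$ there is $k_u$, $1\le k_u\le|U^I_{\min}|$, with $u={\bf a}^+_{\mu_I+k_u}+\sum_{j=1}^{\mu_I}{\bf a}_j^+$. For $u\in U^I_{\min}$, $L_u$ is the set of $l\in\mathbb{Z}^N$ with $\sum_{k=1}^Nl_k{\bf a}_k^+={\bf 0}$, $l_j\le0$ for $j=1,\dots,\mu_I$ and for $j=\mu_I+k_u$, and $l_j\ge0$ for all other $j$. *)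

From mathcomp Require Import all_boot all_order all_algebra.
Set Implicit Arguments. Unset Strict Implicit. Unset Printing Implicit Defensive.
Import Order.TTheory GRing.Theory Num.Theory.

Definition ceil_div (m d : nat) : nat := (m + d.-1) %/ d.

(* mu_I : ceil(|I|/d) = mu_I + 1  (requires |I| >= 1) *)
Definition mu (n d : nat) (I : {set 'I_n.+1}) : nat := (ceil_div #|I| d).-1.

(* Coordinates of any u in U^I_min are bounded by d*(mu_I+1), so U^I_min is
   exactly represented inside the finite type of functions 'I_(n+2) -> 'I_(bnd). *)
Definition bnd (n d : nat) (I : {set 'I_n.+1}) : nat := (d * (mu d I).+1).+1.

(* the (n+1)-th coordinate, i.e. index n+1 of N^{n+2} with indices 0..n+1 *)
Definition last_ix (n : nat) : 'I_n.+2 := ord_max.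

Definition Umin (n d : nat) (I : {set 'I_n.+1}) : {set {ffun 'I_n.+2 -> 'I_(bnd d I)}} :=
  [set u : {ffun 'I_n.+2 -> 'I_(bnd d I)} |
     [&& (\sum_(i < n.+1) (u (widen_ord (leqnSn n.+1) i) : nat) == d * u (last_ix n)),
         [forall i in I, 0 < (u (widen_ord (leqnSn n.+1) i) : nat)] &
         ((u (last_ix n) : nat) == (mu d I).+1)]].

(* a^+_j = (a_j, 1) in N^{n+2}; a is indexed by j = 1..N (paper's indexing) *)
Definition aplus (n : nat) (a : nat -> 'I_n.+1 -> nat) (j : nat) (i : 'I_n.+2) : nat :=
  if (i : nat) <= n then a j (inord i) else 1.

(* l (indexed by 1..N) belongs to L_u, where k_u = ku *)
Definition inL (n N m : nat) (a : nat -> 'I_n.+1 -> nat) (ku : nat) (l : nat -> int) : Prop :=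
  [/\ (forall i : 'I_n.+2, (\sum_(1 <= j < N.+1) l j * (aplus a j i)%:Z)%R = 0%R),
      (forall j, 1 <= j <= N -> (j <= m) || (j == m + ku) -> (l j <= 0)%R) &
      (forall j, 1 <= j <= N -> ~~ ((j <= m) || (j == m + ku)) -> (0 <= l j)%R)].

From mathcomp Require Import all_boot all_order all_algebra.
Set Implicit Arguments. Unset Strict Implicit. Unset Printing Implicit Defensive.
Import Order.TTheory GRing.Theory Num.Theory.

(* On the first mu_I columns all l^(u) are nonpositive, and on a column that is
   nobody's pivot mu_I + k_u they are all nonnegative, so there the vanishing
   sum forces them to vanish.  For the remaining columns, weigh the relations by
   squared distances: since sum_j l_j a_j^+ = 0 and sum_j l_j = 0 (last
   coordinate), sum_j l_j |a_j^+ - c|^2 does not depend on c.  Centered at 0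
   these quantities add up to 0 over u; centered at the pivot a^+_(mu_I + k_u)
   each is a sum of nonnegative terms.  So every term vanishes: l^(u)_j <> 0
   forces a_j^+ = a^+_(mu_I + k_u), which for j a pivot of some v means v = u.
   Finally sum_j l_j = 0 kills the pivot entry. *)

Section SquaredDistance.
Local Open Scope ring_scope.

Definition sqdist (R : pzRingType) (p : nat) (y z : 'I_p -> R) : R :=
  \sum_(i < p) (y i - z i) ^+ 2.

Lemma sqdist_ge0 (R : realDomainType) p (y z : 'I_p -> R) : 0 <= sqdist y z.
Proof. by apply: sumr_ge0 => i _; apply: sqr_ge0. Qed.

Lemma sqdist_eq0 (R : realDomainType) p (y z : 'I_p -> R) :
  sqdist y z = 0 -> y =1 z.
Proof.
move=> yz0 i; apply/eqP; rewrite -subr_eq0 -sqrf_eq0; apply/eqP.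
by apply: (psumr_eq0P _ yz0) => // i' _; apply: sqr_ge0.
Qed.

Lemma sqdistxx (R : pzRingType) p (y : 'I_p -> R) : sqdist y y = 0.
Proof. by apply: big1 => i _; rewrite subrr expr0n. Qed.

Lemma weighted_sqdist_center (R : comPzRingType) (J : Type) (r : seq J) p
    (l : J -> R) (x : J -> 'I_p -> R) (c c' : 'I_p -> R) :
  \sum_(j <- r) l j = 0 -> (forall i, \sum_(j <- r) l j * x j i = 0) ->
  \sum_(j <- r) l j * sqdist (x j) c = \sum_(j <- r) l j * sqdist (x j) c'.
Proof.
move=> l_sum0 l_rel.
suff center0 c0 : \sum_(j <- r) l j * sqdist (x j) c0 =
                  \sum_(i < p) \sum_(j <- r) l j * x j i ^+ 2.
  by rewrite !center0.
rewrite /sqdist; under eq_bigr do rewrite mulr_sumr; rewrite exchange_big /=.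
apply: eq_bigr => i _; under eq_bigr do rewrite sqrrB !mulrDr mulrN.
rewrite big_split sumrB /= -!mulr_suml l_sum0 mul0r addr0.
under [X in _ - X]eq_bigr do rewrite mulrnAr mulrA.
by rewrite sumrMnl -mulr_suml l_rel mul0r mul0rn subr0.
Qed.

End SquaredDistance.

Section PivotedRelations.
Local Open Scope ring_scope.

Variables (R : realDomainType) (T : finType) (J : eqType) (p : nat).
Variables (U : {set T}) (r : seq J) (x : J -> 'I_p -> R).
Variables (l : T -> J -> R) (neg : pred J) (piv : T -> J).

Hypothesis r_uniq : uniq r.
Hypothesis sum_l_eq0 : forall j, j \in r -> \sum_(u in U) l u j = 0.
Hypothesis l_relation : forall u i, u \in U -> \sum_(j <- r) l u j * x j i = 0.
Hypothesis l_coef_sum : forall u, u \in U -> \sum_(j <- r) l u j = 0.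
Hypothesis l_le0 :
  forall u j, u \in U -> j \in r -> neg j || (j == piv u) -> l u j <= 0.
Hypothesis l_ge0 :
  forall u j, u \in U -> j \in r -> ~~ (neg j || (j == piv u)) -> 0 <= l u j.
Hypothesis x_piv_inj : {in U &, forall u v, x (piv u) =1 x (piv v) -> u = v}.

Lemma l_neg_eq0 u j : u \in U -> j \in r -> neg j -> l u j = 0.
Proof.
move=> uU jr nj; apply/eqP; rewrite -oppr_eq0; apply/eqP.
have sumN_l : \sum_(v in U) - l v j = 0 by rewrite sumrN sum_l_eq0 ?oppr0.
by apply: (psumr_eq0P _ sumN_l uU) => v vU; rewrite oppr_ge0 l_le0 ?nj.
Qed.

Lemma l_nonpivot_eq0 u j : u \in U -> j \in r -> ~~ neg j ->
  (forall v, v \in U -> j != piv v) -> l u j = 0.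
Proof.
move=> uU jr nj jpiv; apply: (psumr_eq0P _ (sum_l_eq0 jr) uU) => v vU.
by rewrite l_ge0 // negb_or nj jpiv.
Qed.

Lemma l_sqdist_piv_ge0 u j : u \in U -> j \in r ->
  0 <= l u j * sqdist (x j) (x (piv u)).
Proof.
move=> uU jr; case nj: (neg j); first by rewrite l_neg_eq0 ?mul0r.
have [->|jpu] := eqVneq j (piv u); first by rewrite sqdistxx mulr0.
by rewrite mulr_ge0 ?sqdist_ge0 // l_ge0 // nj jpu.
Qed.

Lemma l_sqdist_piv_eq0 u j : u \in U -> j \in r ->
  l u j * sqdist (x j) (x (piv u)) = 0.
Proof.
move=> uU jr.
pose Q v := \sum_(j <- r) l v j * sqdist (x j) (fun=> 0).
have QE v : v \in U -> Q v = \sum_(j <- r) l v j * sqdist (x j) (x (piv v)).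
  move=> vU; apply: weighted_sqdist_center => [|i].
    exact: l_coef_sum.
  exact: l_relation.
have Q_ge0 v : v \in U -> 0 <= Q v.
  by move=> vU; rewrite QE // big_seq sumr_ge0 // => j' /l_sqdist_piv_ge0; apply.
have sumQ : \sum_(v in U) Q v = 0.
  rewrite exchange_big /= big_seq big1 // => j' j'r.
  by rewrite -mulr_suml sum_l_eq0 ?mul0r.
move: (psumr_eq0P Q_ge0 sumQ uU); rewrite QE // big_seq => /eqP.
rewrite psumr_eq0 => [/allP/(_ j jr)|j' /l_sqdist_piv_ge0]; last by apply.
by rewrite jr => /eqP.
Qed.

Lemma l_off_pivot_eq0 u j : u \in U -> j \in r -> j != piv u -> l u j = 0.
Proof.
move=> uU jr jpu; case nj: (neg j); first exact: l_neg_eq0.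
have [v /andP[vU /eqP jv]|nopiv] := pickP [pred v | (v \in U) && (j == piv v)].
  move/eqP: (l_sqdist_piv_eq0 uU jr); rewrite mulf_eq0 => /orP[/eqP //|].
  move=> /eqP/sqdist_eq0; rewrite jv => /(x_piv_inj vU uU) vu.
  by rewrite jv vu eqxx in jpu.
apply: l_nonpivot_eq0 => //; first by rewrite nj.
by move=> v vU; move: (nopiv v); rewrite /= vU => /negbT.
Qed.

Lemma pivoted_relations_eq0 u j : u \in U -> j \in r -> l u j = 0.
Proof.
move=> uU jr; have [jpu|] := eqVneq j (piv u); last exact: l_off_pivot_eq0.
move: (l_coef_sum uU); rewrite (bigD1_seq j) //= big_seq_cond big1 ?addr0 //.
by move=> j' /andP[j'r j'j]; rewrite l_off_pivot_eq0 // -jpu.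
Qed.

End PivotedRelations.

Theorem proposition7p7 (n d N : nat) (I : {set 'I_n.+1})
  (a : nat -> 'I_n.+1 -> nat)
  (k : {ffun 'I_n.+2 -> 'I_(bnd d I)} -> nat)
  (l : {ffun 'I_n.+2 -> 'I_(bnd d I)} -> nat -> int) :
  1 <= n -> 2 <= d -> 0 < #|I| ->
  (forall j, 1 <= j <= N -> \sum_(i < n.+1) a j i = d) ->
  mu d I + #|Umin d I| <= N ->
  (forall u, u \in Umin d I ->
     1 <= k u <= #|Umin d I| /\
     (forall i : 'I_n.+2,
        (u i : nat) = aplus a (mu d I + k u) i + \sum_(1 <= j < (mu d I).+1) aplus a j i)) ->
  (forall u, u \in Umin d I -> inL N (mu d I) a (k u) (l u)) ->
  ((forall j, 1 <= j <= N -> (\sum_(u in Umin d I) l u j)%R = 0%R) <->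
   (forall u, u \in Umin d I -> forall j, 1 <= j <= N -> l u j = 0%R)).
Proof.
(* Of the description of U^I_min only the decomposition of u through
   a^+_(mu_I + k_u) is needed: it makes u determined by its pivot column. *)
move=> _ _ _ _ _ u_decomp l_in_L.
split=> [sum_l0 u uU j j_range|l0 j j_range]; last first.
  by rewrite big1 // => u uU; apply: l0.
have mem_r j' : (j' \in index_iota 1 N.+1) = (1 <= j' <= N).
  by rewrite mem_index_iota ltnS.
apply: (@pivoted_relations_eq0 _ _ _ _ (Umin d I) (index_iota 1 N.+1)
          (fun j i => (aplus a j i)%:Z%R) l (fun j => j <= mu d I)
          (fun u => mu d I + k u) (iota_uniq _ _) _ _ _ _ _ _ _ _ uU);
  rewrite ?mem_r //.
- by move=> j'; rewrite mem_r; apply: sum_l0.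
- by move=> v i vU; case: (l_in_L v vU) => rel _ _; apply: rel.
- move=> v vU; case: (l_in_L v vU) => rel _ _; rewrite -[RHS](rel (last_ix n)).
  by apply: eq_bigr => j' _; rewrite /aplus /last_ix /= ltnn mulr1.
- by move=> v j'; rewrite mem_r => vU; case: (l_in_L v vU) => _ le0 _; apply: le0.
- by move=> v j'; rewrite mem_r => vU; case: (l_in_L v vU) => _ _ ge0; apply: ge0.
- move=> v w vU wU same_a; apply/ffunP => i; apply: val_inj.
  rewrite /= (u_decomp v vU).2 (u_decomp w wU).2; congr (_ + _).
  by apply/eqP; rewrite -eqz_nat; apply/eqP; apply: same_a.
Qed.
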